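(* Let $\lambda>-1/2$, $\lambda\ne0$, $M,N\ge0$ integers, $a_0,\dots,a_M\in\mathbb{R}$, and $f_M(x)=\sum_{m=0}^M a_mC^{(\lambda)}_m(x)$. For $0\le n\le N$ and $y\in[-1,1]$ write $\int_{-1}^{y}f_M(y-1-t)C^{(\lambda)}_n(t)\,\mathrm{d}t=\sum_{k=0}^{M+N+1}R^{(\lambda)}_{k,n}C^{(\lambda)}_k(y)$. Then for all integers $k,n$ with $M+1\le k,n\le N$, $$R^{(\lambda)}_{k,n}=(-1)^{k+n}\frac{k+\lambda}{n+\lambda}R^{(\lambda)}_{n,k}.$$
   Context: Gegenbauer polynomials $C^{(\lambda)}_n$ ($\lambda>-1/2$, $\lambda\ne0$) are defined by $C^{(\lambda)}_{-1}=0$, $C^{(\lambda)}_0=1$, $2(n+\lambda)xC^{(\lambda)}_n(x)=(n+1)C^{(\lambda)}_{n+1}(x)+(n+2\lambda-1)C^{(\lambda)}_{n-1}(x)$. *)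

From Stdlib Require Import Reals.
From Coquelicot Require Import Coquelicot.
Open Scope R_scope.

(* geg_pair lam x n = (C^{(lam)}_{n-1}(x), C^{(lam)}_n(x)), with C_{-1} = 0, C_0 = 1 and
   (m+1) C_{m+1}(x) = 2(m+lam) x C_m(x) - (m+2lam-1) C_{m-1}(x). *)
Fixpoint geg_pair (lam x : R) (n : nat) : R * R :=
  match n with
  | O => (0, 1)
  | S m => let (a, b) := geg_pair lam x m in
           (b, (2 * (INR m + lam) * x * b - (INR m + 2 * lam - 1) * a) / (INR m + 1))
  end.

Definition gegenbauer (lam : R) (n : nat) (x : R) : R := snd (geg_pair lam x n).

Definition fM (lam : R) (M : nat) (a : nat -> R) (x : R) : R :=
  sum_f_R0 (fun m => a m * gegenbauer lam m x) M.

From Stdlib Require Import Reals Lra Lia FunctionalExtensionality.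
From Coquelicot Require Import Coquelicot.
Open Scope R_scope.

(* Let A be the operator on coefficient sequences that takes the Gegenbauer coefficients of a
   polynomial to those of an antiderivative; it comes from 2 (k + lam) C_k = (C_(k+1) - C_(k-1))'.
   Integrating by parts M + 1 times,
     int_(-1)^y f_M(y - 1 - t) C_n(t) dt
       = sum_(i <= M) f_M^(i)(-1) (A^(i+1) e_n)(y) + (a polynomial of degree <= M),
   and the C_k are linearly independent on [-1, 1], so R_(k,n) = sum_i f_M^(i)(-1) (A^(i+1))_(k,n)
   for k > M.  The tridiagonal matrix A satisfies A_(k+1,k) w_k = A_(k,k+1) w_(k+1) for the
   weights w_k = (-1)^k (k + lam), i.e. A W is symmetric for W = diag(w_k); hence so is every
   A^j W = W (A^T)^j, which is the claimed relation. *)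

(* sum_(i < n) f i: unlike [sum_f_R0] it allows empty sums (the span of no C_k is {0}). *)
Fixpoint sum_lt (n : nat) (f : nat -> R) : R :=
  match n with O => 0 | S m => sum_lt m f + f m end.

Lemma sum_lt_ext n f g : (forall i, (i < n)%nat -> f i = g i) -> sum_lt n f = sum_lt n g.
Proof.
  induction n as [|n IH]; intros Hfg; simpl; [reflexivity|].
  rewrite IH, Hfg; [reflexivity | lia | intros; apply Hfg; lia].
Qed.

Lemma sum_f_R0_sum_lt f n : sum_f_R0 f n = sum_lt (S n) f.
Proof. induction n as [|n IH]; simpl in *; [ring|]. rewrite IH; reflexivity. Qed.

Lemma sum_lt_shift n f : sum_lt (S n) f = f O + sum_lt n (fun i => f (S i)).
Proof. induction n as [|n IH]; simpl in *; [ring|]. rewrite IH; ring. Qed.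

Lemma sum_lt_mult_r n f c : sum_lt n f * c = sum_lt n (fun i => f i * c).
Proof. induction n as [|n IH]; simpl; [ring|]. rewrite <- IH; ring. Qed.

Lemma is_derive_sum_lt n (f : nat -> R -> R) (df : nat -> R) x :
  (forall k, (k < n)%nat -> is_derive (f k) x (df k)) ->
  is_derive (fun y => sum_lt n (fun k => f k y)) x (sum_lt n df).
Proof.
  induction n as [|n IH]; intros Hf; simpl.
  - apply (is_derive_const 0).
  - apply (is_derive_plus (fun y => sum_lt n (fun k => f k y)) (f n)).
    + apply IH; intros; apply Hf; lia.
    + apply Hf; lia.
Qed.

Definition unit_vec (n k : nat) : R := if Nat.eqb k n then 1 else 0.

Definition supported (L : nat) (u : nat -> R) : Prop := forall k, (L <= k)%nat -> u k = 0.

Lemma supported_unit_vec m : supported (S m) (unit_vec m).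
Proof. intros k Hk; unfold unit_vec; destruct (Nat.eqb_spec k m); [lia | reflexivity]. Qed.

Lemma INR_S_neq0 m : INR m + 1 <> 0.
Proof. pose proof (pos_INR m); lra. Qed.

Lemma is_derive_vanishing a b (H : R -> R) t l :
  (forall x, a < x < b -> H x = 0) -> a < t < b -> is_derive H t l -> l = 0.
Proof.
  intros H0 Ht Hd.
  assert (Hloc : locally t (fun x => a < x < b))
    by exact (open_and _ _ (open_gt a) (open_lt b) t Ht).
  rewrite <- (is_derive_unique _ _ _ Hd).
  apply is_derive_unique, (is_derive_ext_loc (fun _ => 0));
    [|apply (is_derive_const (V := R_NormedModule))].
  eapply filter_imp; [|exact Hloc]; intros x Hx; symmetry; auto.
Qed.

Lemma is_derive_reflect (F F' : R -> R) s t :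
  (forall x, is_derive F x (F' x)) -> is_derive (fun t => F (s - t)) t (- F' (s - t)).
Proof.
  intros HF.
  replace (- F' (s - t)) with (scal (-1) (F' (s - t)))
    by (unfold scal; simpl; unfold mult; simpl; ring).
  apply (is_derive_comp F (fun t => s - t)); [apply HF | auto_derive; [exact I | ring]].
Qed.

Section Gegenbauer.

Variable lam : R.

Definition gegenbauer_prev (n : nat) (x : R) : R := fst (geg_pair lam x n).

(* The pair (C'_(n-1), C'_n), defined through 2 (m + lam) C_m = C'_(m+1) - C'_(m-1);
   [is_derive_gegenbauer] confirms that these are the derivatives. *)
Fixpoint gegenbauer_deriv_pair (x : R) (n : nat) : R * R :=
  match n with
  | O => (0, 0)
  | S m => let (d', d) := gegenbauer_deriv_pair x m in
           (d, 2 * (INR m + lam) * gegenbauer lam m x + d')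
  end.

Definition gegenbauer_deriv (n : nat) (x : R) : R := snd (gegenbauer_deriv_pair x n).
Definition gegenbauer_deriv_prev (n : nat) (x : R) : R := fst (gegenbauer_deriv_pair x n).

Lemma gegenbauer_S m x :
  gegenbauer lam (S m) x =
  (2 * (INR m + lam) * x * gegenbauer lam m x
   - (INR m + 2 * lam - 1) * gegenbauer_prev m x) / (INR m + 1).
Proof. unfold gegenbauer, gegenbauer_prev; simpl. destruct (geg_pair lam x m); reflexivity. Qed.

Lemma gegenbauer_prev_S m x : gegenbauer_prev (S m) x = gegenbauer lam m x.
Proof. unfold gegenbauer, gegenbauer_prev; simpl. destruct (geg_pair lam x m); reflexivity. Qed.

Lemma gegenbauer_deriv_S m x :
  gegenbauer_deriv (S m) x = 2 * (INR m + lam) * gegenbauer lam m x + gegenbauer_deriv_prev m x.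
Proof.
  unfold gegenbauer_deriv, gegenbauer_deriv_prev; simpl.
  destruct (gegenbauer_deriv_pair x m); reflexivity.
Qed.

Lemma gegenbauer_deriv_prev_S m x : gegenbauer_deriv_prev (S m) x = gegenbauer_deriv m x.
Proof.
  unfold gegenbauer_deriv, gegenbauer_deriv_prev; simpl.
  destruct (gegenbauer_deriv_pair x m); reflexivity.
Qed.

Lemma gegenbauer_deriv_identities n x :
  x * gegenbauer_deriv n x - gegenbauer_deriv_prev n x = INR n * gegenbauer lam n x /\
  x * gegenbauer_deriv_prev n x - gegenbauer_deriv n x
  = - (INR n + 2 * lam - 1) * gegenbauer_prev n x.
Proof.
  induction n as [|n [IH IH']].
  - unfold gegenbauer_deriv, gegenbauer_deriv_prev, gegenbauer_prev; simpl; split; ring.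
  - rewrite gegenbauer_deriv_S, gegenbauer_deriv_prev_S, gegenbauer_prev_S, gegenbauer_S, S_INR.
    split.
    + replace (gegenbauer_deriv n x)
        with (x * gegenbauer_deriv_prev n x + (INR n + 2 * lam - 1) * gegenbauer_prev n x) by lra.
      field; apply INR_S_neq0.
    + replace (gegenbauer_deriv_prev n x)
        with (x * gegenbauer_deriv n x - INR n * gegenbauer lam n x) by lra.
      ring.
Qed.

Lemma is_derive_gegenbauer n x :
  is_derive (gegenbauer lam n) x (gegenbauer_deriv n x) /\
  is_derive (gegenbauer_prev n) x (gegenbauer_deriv_prev n x).
Proof.
  revert x; induction n as [|n IH]; intros x.
  - split; unfold gegenbauer, gegenbauer_prev, gegenbauer_deriv, gegenbauer_deriv_prev; simpl;
      apply (is_derive_const (V := R_NormedModule)).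
  - destruct (IH x) as [HC HP]; split.
    + eapply is_derive_ext; [intro t; symmetry; apply gegenbauer_S|].
      auto_derive; [repeat split; eexists; eassumption|].
      replace (Derive (fun y => gegenbauer lam n y) x) with (gegenbauer_deriv n x)
        by (symmetry; apply is_derive_unique; exact HC).
      replace (Derive (fun y => gegenbauer_prev n y) x) with (gegenbauer_deriv_prev n x)
        by (symmetry; apply is_derive_unique; exact HP).
      rewrite gegenbauer_deriv_S, !Rmult_1_l.
      destruct (gegenbauer_deriv_identities n x) as [Hid _].
      replace (2 * (INR n + lam) * x * gegenbauer_deriv n x)
        with (2 * (INR n + lam) * (gegenbauer_deriv_prev n x + INR n * gegenbauer lam n x))
        by (rewrite <- Hid; ring).
      field; apply INR_S_neq0.
    + rewrite gegenbauer_deriv_prev_S.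
      eapply is_derive_ext; [intro t; symmetry; apply gegenbauer_prev_S | exact HC].
Qed.

Definition gegenbauer_sum (n : nat) (z : nat -> R) (x : R) : R :=
  sum_lt n (fun k => z k * gegenbauer lam k x).

Definition in_gegenbauer_span (n : nat) (F : R -> R) : Prop :=
  exists z, forall x, F x = gegenbauer_sum n z x.

Lemma gegenbauer_sum_zero n x : gegenbauer_sum n (fun _ => 0) x = 0.
Proof. induction n as [|n IH]; unfold gegenbauer_sum in *; simpl; [|rewrite IH]; ring. Qed.

Lemma gegenbauer_sum_lincomb n a z w x :
  gegenbauer_sum n (fun k => a * z k + w k) x = a * gegenbauer_sum n z x + gegenbauer_sum n w x.
Proof. induction n as [|n IH]; unfold gegenbauer_sum in *; simpl; [|rewrite IH]; ring. Qed.

Lemma gegenbauer_sum_supported L B z x :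
  supported L z -> (L <= B)%nat -> gegenbauer_sum B z x = gegenbauer_sum L z x.
Proof.
  intros Hz; induction 1 as [|B HLB IH]; [reflexivity|].
  unfold gegenbauer_sum in *; simpl. rewrite IH, Hz by lia. ring.
Qed.

Lemma gegenbauer_sum_unit n m x :
  (m < n)%nat -> gegenbauer_sum n (unit_vec m) x = gegenbauer lam m x.
Proof.
  intros Hm.
  rewrite (gegenbauer_sum_supported (S m)) by (apply supported_unit_vec || lia).
  unfold gegenbauer_sum; simpl.
  rewrite (sum_lt_ext m _ (fun k => 0 * gegenbauer lam k x)).
  - fold (gegenbauer_sum m (fun _ => 0) x). rewrite gegenbauer_sum_zero.
    unfold unit_vec; rewrite Nat.eqb_refl; ring.
  - intros k Hk; unfold unit_vec; destruct (Nat.eqb_spec k m); [lia | reflexivity].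
Qed.

Lemma in_span_ext n F G :
  in_gegenbauer_span n F -> (forall x, F x = G x) -> in_gegenbauer_span n G.
Proof. intros [z Hz] HFG; exists z; intros x; rewrite <- HFG; apply Hz. Qed.

Lemma in_span_zero n : in_gegenbauer_span n (fun _ => 0).
Proof. exists (fun _ => 0); intros x; symmetry; apply gegenbauer_sum_zero. Qed.

Lemma in_span_lincomb n a F G :
  in_gegenbauer_span n F -> in_gegenbauer_span n G ->
  in_gegenbauer_span n (fun x => a * F x + G x).
Proof.
  intros [z Hz] [w Hw]; exists (fun k => a * z k + w k); intros x.
  rewrite gegenbauer_sum_lincomb, Hz, Hw; reflexivity.
Qed.

Lemma in_span_mono n m F : (n <= m)%nat -> in_gegenbauer_span n F -> in_gegenbauer_span m F.
Proof.
  intros Hnm [z Hz]; exists (fun k => if Nat.ltb k n then z k else 0); intros x.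
  rewrite (gegenbauer_sum_supported n), Hz; [|intros k Hk | exact Hnm];
    [apply sum_lt_ext; intros k Hk|]; destruct (Nat.ltb_spec k n); solve [reflexivity | lia].
Qed.

Lemma in_span_sum n m (F : nat -> R -> R) :
  (forall k, (k < m)%nat -> in_gegenbauer_span n (F k)) ->
  in_gegenbauer_span n (fun x => sum_lt m (fun k => F k x)).
Proof.
  induction m as [|m IH]; intros HF; simpl; [apply in_span_zero|].
  apply in_span_ext with (fun x => 1 * F m x + sum_lt m (fun k => F k x)); [|intros; ring].
  apply in_span_lincomb; [apply HF | apply IH; intros; apply HF]; lia.
Qed.

Lemma in_span_gegenbauer k : in_gegenbauer_span (S k) (gegenbauer lam k).
Proof. exists (unit_vec k); intros x; symmetry; apply gegenbauer_sum_unit; lia. Qed.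

Lemma in_span_gegenbauer_deriv k :
  in_gegenbauer_span k (gegenbauer_deriv k) /\ in_gegenbauer_span k (gegenbauer_deriv_prev k).
Proof.
  induction k as [|k [IH IH']].
  - split; apply in_span_ext with (fun _ => 0); try apply in_span_zero; reflexivity.
  - split.
    + apply in_span_ext
        with (fun x => 2 * (INR k + lam) * gegenbauer lam k x + gegenbauer_deriv_prev k x);
        [|intros; symmetry; apply gegenbauer_deriv_S].
      apply in_span_lincomb; [apply in_span_gegenbauer | apply in_span_mono with k; auto].
    + apply in_span_ext with (gegenbauer_deriv k);
        [|intros; symmetry; apply gegenbauer_deriv_prev_S].
      apply in_span_mono with k; auto.
Qed.

Lemma in_span_deriv n F :
  in_gegenbauer_span (S n) F ->
  exists G, in_gegenbauer_span n G /\ forall x, is_derive F x (G x).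
Proof.
  intros [z Hz].
  exists (fun x => sum_lt (S n) (fun k => z k * gegenbauer_deriv k x)); split.
  - apply (in_span_sum n (S n) (fun k x => z k * gegenbauer_deriv k x)); intros k Hk.
    apply in_span_ext with (fun x => z k * gegenbauer_deriv k x + 0); [|intros; ring].
    apply in_span_lincomb; [|apply in_span_zero].
    apply in_span_mono with k; [lia | apply in_span_gegenbauer_deriv].
  - intros x; eapply is_derive_ext; [intros t; symmetry; apply Hz|].
    apply (is_derive_sum_lt (S n) (fun k t => z k * gegenbauer lam k t)); intros k _.
    apply is_derive_scal, is_derive_gegenbauer.
Qed.

Lemma in_span_ex_derive n F x : in_gegenbauer_span n F -> ex_derive F x.
Proof.
  intros HF; destruct (in_span_deriv n F) as [G [_ HG]]; [apply in_span_mono with n; auto|].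
  exists (G x); apply HG.
Qed.

Lemma in_span_gegenbauer_sum n z : in_gegenbauer_span n (gegenbauer_sum n z).
Proof. exists z; reflexivity. Qed.

Hypothesis lam_regular : forall k : nat, INR k + lam <> 0.

Lemma in_span_top_coef_zero a b m c F :
  a < b -> in_gegenbauer_span m F ->
  (forall x, a < x < b -> c * gegenbauer lam m x + F x = 0) -> c = 0.
Proof.
  intros Hab; revert c F; induction m as [|m IH]; intros c F HF H0.
  - destruct HF as [z Hz].
    specialize (H0 ((a + b) / 2) ltac:(lra)); rewrite Hz in H0.
    unfold gegenbauer_sum, gegenbauer in H0; simpl in H0; lra.
  - destruct (in_span_deriv m F HF) as [G [HG HdG]].
    assert (Hlead : c * (2 * (INR m + lam)) = 0).
    { apply (IH _ (fun x => c * gegenbauer_deriv_prev m x + G x)).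
      - apply in_span_lincomb; [apply in_span_gegenbauer_deriv | exact HG].
      - intros x Hx.
        assert (Hd : is_derive (fun x => c * gegenbauer lam (S m) x + F x) x
                       (c * gegenbauer_deriv (S m) x + G x)).
        { apply (is_derive_plus (fun x => c * gegenbauer lam (S m) x) F);
            [apply is_derive_scal, is_derive_gegenbauer | apply HdG]. }
        rewrite <- (is_derive_vanishing a b _ x _ H0 Hx Hd), gegenbauer_deriv_S; ring. }
    apply Rmult_integral in Hlead as [Hc | H2]; [exact Hc|].
    exfalso; apply (lam_regular m); lra.
Qed.

Lemma gegenbauer_sum_coef_zero a b L B v Q :
  a < b -> in_gegenbauer_span L Q ->
  (forall y, a < y < b -> gegenbauer_sum B v y = Q y) ->
  forall k, (L <= k < B)%nat -> v k = 0.
Proof.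
  intros Hab HQ; induction B as [|B IH]; intros HvQ k Hk; [lia|].
  assert (HvB : v B = 0).
  { apply (in_span_top_coef_zero a b B _ (fun y => -1 * Q y + gegenbauer_sum B v y) Hab).
    - apply in_span_lincomb;
        [apply in_span_mono with L; [lia | exact HQ] | apply in_span_gegenbauer_sum].
    - intros y Hy; rewrite <- (HvQ y Hy); unfold gegenbauer_sum; simpl; ring. }
  destruct (Nat.eq_dec k B) as [->|HkB]; [exact HvB|].
  apply IH; [|lia]; intros y Hy.
  rewrite <- (HvQ y Hy); unfold gegenbauer_sum; simpl; rewrite HvB; ring.
Qed.

Definition gegenbauer_antideriv (k : nat) (x : R) : R :=
  (gegenbauer lam (S k) x - gegenbauer_prev k x) / (2 * (INR k + lam)).

(* Gegenbauer coefficients of an antiderivative of sum_j u_j C_j,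
   read off from C_j = (C_(j+1) - C_(j-1))' / (2 (j + lam)). *)
Definition antideriv (u : nat -> R) (k : nat) : R :=
  match k with O => 0 | S j => u j / (2 * (INR j + lam)) end
  - u (S k) / (2 * (INR (S k) + lam)).

Lemma is_derive_gegenbauer_antideriv k x :
  is_derive (gegenbauer_antideriv k) x (gegenbauer lam k x).
Proof.
  destruct (is_derive_gegenbauer (S k) x) as [HC _], (is_derive_gegenbauer k x) as [_ HP].
  unfold gegenbauer_antideriv; auto_derive; [repeat split; eexists; eassumption|].
  replace (Derive (fun y => gegenbauer lam (S k) y) x) with (gegenbauer_deriv (S k) x)
    by (symmetry; apply is_derive_unique; exact HC).
  replace (Derive (fun y => gegenbauer_prev k y) x) with (gegenbauer_deriv_prev k x)
    by (symmetry; apply is_derive_unique; exact HP).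
  rewrite gegenbauer_deriv_S; field; apply lam_regular.
Qed.

Lemma supported_antideriv L u : supported L u -> supported (S L) (antideriv u).
Proof.
  intros Hu [|k] Hk; [lia|]; unfold antideriv.
  rewrite !Hu by lia; unfold Rdiv; ring.
Qed.

Lemma gegenbauer_sum_antideriv B L u x :
  supported L u -> (L < B)%nat ->
  gegenbauer_sum B (antideriv u) x = sum_lt B (fun k => u k * gegenbauer_antideriv k x).
Proof.
  intros Hu HLB.
  (* summation by parts, keeping the two boundary terms at B *)
  assert (Hparts : forall B,
    gegenbauer_sum B (antideriv u) x
    + match B with O => 0 | S j => u j / (2 * (INR j + lam)) end * gegenbauer lam B x
    + u B / (2 * (INR B + lam)) * gegenbauer_prev B x
    = sum_lt B (fun k => u k * gegenbauer_antideriv k x)).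
  { clear B HLB; induction B as [|B IH].
    - unfold gegenbauer_sum, gegenbauer_prev; simpl; ring.
    - cbn [sum_lt]; rewrite <- IH.
      unfold gegenbauer_sum, antideriv, gegenbauer_antideriv; cbn [sum_lt].
      rewrite gegenbauer_prev_S; unfold Rdiv; ring. }
  rewrite <- Hparts; destruct B as [|B]; [lia|].
  rewrite !Hu by lia; unfold Rdiv; ring.
Qed.

Lemma is_derive_gegenbauer_sum_antideriv B L u x :
  supported L u -> (L < B)%nat ->
  is_derive (gegenbauer_sum B (antideriv u)) x (gegenbauer_sum B u x).
Proof.
  intros Hu HLB.
  eapply is_derive_ext; [intros t; symmetry; apply (gegenbauer_sum_antideriv B L u t Hu HLB)|].
  apply (is_derive_sum_lt B (fun k t => u k * gegenbauer_antideriv k t)); intros k _.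
  apply is_derive_scal, is_derive_gegenbauer_antideriv.
Qed.

Definition antideriv_comb (n : nat) (c u : nat -> R) (k : nat) : R :=
  sum_lt n (fun i => c i * Nat.iter (S i) antideriv u k).

Lemma antideriv_comb_S n c u :
  antideriv_comb (S n) c u
  = fun k => c O * antideriv u k + antideriv_comb n (fun i => c (S i)) (antideriv u) k.
Proof.
  apply functional_extensionality; intros k; unfold antideriv_comb.
  rewrite sum_lt_shift; f_equal; apply sum_lt_ext; intros i _.
  rewrite (Nat.iter_succ_r (S i)); reflexivity.
Qed.

(* Up to an element of the span of C_0, ..., C_(n-1), the convolution of F with the expansion
   [u] is the expansion [antideriv_comb n c u]; integrating by parts gives [c i] = F^(i)(-1). *)
Definition convolution_expansion (n : nat) (F : R -> R) (c : nat -> R) : Prop :=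
  forall B L u, supported L u -> (L + n <= B)%nat ->
    exists Q, in_gegenbauer_span n Q /\ forall y,
      is_RInt (fun t => F (y - 1 - t) * gegenbauer_sum B u t) (-1) y
              (gegenbauer_sum B (antideriv_comb n c u) y + Q y).

Lemma integral_convolution n F :
  in_gegenbauer_span n F -> exists c, convolution_expansion n F c.
Proof.
  revert F; induction n as [|n IH]; intros F HF.
  - destruct HF as [z Hz].
    exists (fun _ => 0); intros B L u _ _; exists (fun _ => 0); split; [apply in_span_zero|].
    intros y; apply (is_RInt_ext (fun _ => 0)).
    + intros t _; rewrite Hz; unfold gegenbauer_sum; simpl; ring.
    + change (antideriv_comb 0 _ u) with (fun _ : nat => 0); rewrite gegenbauer_sum_zero.
      replace (0 + 0) with (scal (y - -1) 0) by (unfold scal; simpl; unfold mult; simpl; ring).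
      apply (is_RInt_const (V := R_NormedModule)).
  - destruct (in_span_deriv n F HF) as [F' [HF' HdF]].
    destruct (IH F' HF') as [c' Hc'].
    exists (fun i => match i with O => F (-1) | S i => c' i end).
    intros B L u Hu HLB.
    destruct (Hc' B (S L) (antideriv u) (supported_antideriv L u Hu) ltac:(lia))
      as [Q' [HQ' HI']].
    pose (G := gegenbauer_sum B (antideriv u)).
    exists (fun y => - G (-1) * F y + Q' y); split.
    { apply in_span_lincomb; [exact HF | apply in_span_mono with n; auto]. }
    intros y.
    replace (gegenbauer_sum B (antideriv_comb (S n) _ u) y + _)
      with (minus (minus (scal (F (y - 1 - y)) (G y)) (scal (F (y - 1 - -1)) (G (-1))))
                  (opp (gegenbauer_sum B (antideriv_comb n c' (antideriv u)) y + Q' y))).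
    2: { rewrite antideriv_comb_S, gegenbauer_sum_lincomb.
         replace (y - 1 - y) with (-1) by ring; replace (y - 1 - -1) with y by ring.
         unfold G, minus, plus, opp, scal; simpl; unfold mult; simpl.
         change (fun i : nat => c' i) with c'; ring. }
    apply (is_RInt_scal_derive_r (fun t => F (y - 1 - t)) G (fun t => - F' (y - 1 - t))
             (gegenbauer_sum B u)).
    - intros t _; apply is_derive_reflect, HdF.
    - intros t _; apply (is_derive_gegenbauer_sum_antideriv B L); [exact Hu | lia].
    - intros t _; apply (ex_derive_continuous (V := R_NormedModule)).
      destruct (in_span_deriv n F') as [F'' [_ HdF']]; [apply in_span_mono with n; auto|].
      eexists; apply (is_derive_opp (fun t => F' (y - 1 - t))), is_derive_reflect, HdF'.
    - intros t _; apply (ex_derive_continuous (V := R_NormedModule)).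
      apply in_span_ex_derive with B, in_span_gegenbauer_sum.
    - apply (is_RInt_ext (fun t => opp (F' (y - 1 - t) * G t)));
        [|apply (is_RInt_opp (V := R_NormedModule)), HI'].
      intros t _; rewrite <- Ropp_mult_distr_l; reflexivity.
Qed.

Lemma iter_antideriv_unit_S j n k :
  Nat.iter (S j) antideriv (unit_vec n) k =
  (Nat.iter j antideriv (unit_vec (S n)) k
   - match n with O => 0 | S p => Nat.iter j antideriv (unit_vec p) k end) / (2 * (INR n + lam)).
Proof.
  revert n k; induction j as [|j IH]; intros n k.
  - change (antideriv (unit_vec n) k = (unit_vec (S n) k
      - match n with O => 0 | S p => unit_vec p k end) / (2 * (INR n + lam))).
    pose proof (lam_regular n); unfold antideriv, unit_vec; destruct k as [|k], n as [|n];
      repeat match goal with |- context [Nat.eqb ?a ?b] =>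
        let E := fresh "E" in destruct (Nat.eqb_spec a b) as [E|E];
        [first [discriminate E | repeat injection E as E; subst] |] end;
      try lia; field; auto.
  - change (Nat.iter (S (S j)) antideriv (unit_vec n) k)
      with (antideriv (Nat.iter (S j) antideriv (unit_vec n)) k).
    unfold antideriv at 1; destruct k as [|k]; rewrite !(IH n);
      destruct n as [|n]; rewrite !Nat.iter_succ; unfold antideriv;
      field; repeat split; apply lam_regular.
Qed.

Definition sym_weight (n : nat) : R := (-1) ^ n * (INR n + lam).

Lemma sym_weight_neq0 n : sym_weight n <> 0.
Proof.
  apply Rmult_integral_contrapositive; split; [apply pow_nonzero; lra | apply lam_regular].
Qed.

Lemma iter_antideriv_unit_sym j k n :
  Nat.iter j antideriv (unit_vec n) k * sym_weight n
  = Nat.iter j antideriv (unit_vec k) n * sym_weight k.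
Proof.
  revert k n; induction j as [|j IH]; intros k n.
  - unfold unit_vec; simpl; do 2 case Nat.eqb_spec; intros; subst; try lia; ring.
  - assert (Hswap : forall m, Nat.iter j antideriv (unit_vec k) m
                             = Nat.iter j antideriv (unit_vec m) k * sym_weight m / sym_weight k)
      by (intros m; rewrite IH; field; apply sym_weight_neq0).
    rewrite iter_antideriv_unit_S.
    change (Nat.iter (S j) antideriv (unit_vec k) n)
      with (antideriv (Nat.iter j antideriv (unit_vec k)) n).
    unfold antideriv; fold antideriv; destruct n as [|n]; rewrite !Hswap; unfold sym_weight.
    all: simpl pow.
    all: field; repeat split; try (apply pow_nonzero; lra); apply lam_regular.
Qed.

Lemma gegenbauer_sum_coef_eq a b L B v w Q :
  a < b -> in_gegenbauer_span L Q ->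
  (forall y, a < y < b -> gegenbauer_sum B v y = gegenbauer_sum B w y + Q y) ->
  forall k, (L <= k < B)%nat -> v k = w k.
Proof.
  intros Hab HQ Hvw k Hk.
  enough (-1 * w k + v k = 0) by lra.
  apply (gegenbauer_sum_coef_zero a b L B (fun k => -1 * w k + v k) Q Hab HQ); [|exact Hk].
  intros y Hy; rewrite gegenbauer_sum_lincomb, Hvw by exact Hy; ring.
Qed.

Lemma convolution_expansion_coef n F c m B v :
  convolution_expansion n F c ->
  (forall y, -1 <= y <= 1 ->
     RInt (fun t => F (y - 1 - t) * gegenbauer lam m t) (-1) y = gegenbauer_sum B v y) ->
  (S m + n <= B)%nat -> forall j, (n <= j < B)%nat -> v j = antideriv_comb n c (unit_vec m) j.
Proof.
  intros Hc Hv HB.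
  destruct (Hc B (S m) (unit_vec m) (supported_unit_vec m) HB) as [Q [HQ HI]].
  apply (gegenbauer_sum_coef_eq (-1) 1 n B v _ Q); [lra | exact HQ |].
  intros y Hy; rewrite <- Hv, <- (is_RInt_unique _ _ _ _ (HI y)) by lra.
  apply RInt_ext; intros t _; rewrite gegenbauer_sum_unit by lia; reflexivity.
Qed.

Lemma antideriv_comb_unit_sym n c k m :
  antideriv_comb n c (unit_vec m) k
  = (-1) ^ (k + m) * ((INR k + lam) / (INR m + lam)) * antideriv_comb n c (unit_vec k) m.
Proof.
  assert (Hw : antideriv_comb n c (unit_vec m) k * sym_weight m
               = antideriv_comb n c (unit_vec k) m * sym_weight k).
  { unfold antideriv_comb; rewrite !sum_lt_mult_r; apply sum_lt_ext; intros i _.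
    rewrite !Rmult_assoc, iter_antideriv_unit_sym; reflexivity. }
  assert (Hsq : (-1) ^ m * (-1) ^ m = 1)
    by (rewrite <- pow_add, <- (pow_1_even m); f_equal; lia).
  apply (Rmult_eq_reg_r (sym_weight m)); [|apply sym_weight_neq0].
  rewrite Hw; unfold sym_weight; rewrite pow_add.
  transitivity (antideriv_comb n c (unit_vec k) m * ((-1) ^ k * (INR k + lam))
                * ((-1) ^ m * (-1) ^ m));
    [rewrite Hsq; ring | field; apply lam_regular].
Qed.

End Gegenbauer.

Lemma gegenbauer_param_regular lam k : -1/2 < lam -> lam <> 0 -> INR k + lam <> 0.
Proof.
  intros Hlam Hlam0; destruct k as [|k]; [simpl; lra|].
  rewrite S_INR; pose proof (pos_INR k); lra.
Qed.

Lemma in_span_fM lam M a : in_gegenbauer_span lam (S M) (fM lam M a).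
Proof. exists a; intros x; apply sum_f_R0_sum_lt. Qed.

Theorem theorem4p4 (lam : R) (M N : nat) (a : nat -> R) (Rc : nat -> nat -> R) :
  -1/2 < lam -> lam <> 0 ->
  (forall (n : nat) (y : R), (n <= N)%nat -> -1 <= y <= 1 ->
     RInt (fun t => fM lam M a (y - 1 - t) * gegenbauer lam n t) (-1) y
     = sum_f_R0 (fun k => Rc k n * gegenbauer lam k y) (M + N + 1)) ->
  forall k n : nat, (M + 1 <= k)%nat -> (k <= N)%nat ->
    (M + 1 <= n)%nat -> (n <= N)%nat ->
    Rc k n = (-1) ^ (k + n) * ((INR k + lam) / (INR n + lam)) * Rc n k.
Proof.
  intros Hlam Hlam0 Hexp k n Hk Hk' Hn Hn'.
  assert (Hreg : forall j, INR j + lam <> 0)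
    by (intros; apply gegenbauer_param_regular; assumption).
  destruct (integral_convolution lam Hreg (S M) (fM lam M a) (in_span_fM lam M a)) as [c Hc].
  assert (Hcoef : forall m j, (m <= N)%nat -> (M + 1 <= j <= N)%nat ->
                    Rc j m = antideriv_comb lam (S M) c (unit_vec m) j).
  { intros m j Hm Hj.
    apply (convolution_expansion_coef lam Hreg (S M) (fM lam M a) c m (S (M + N + 1))
             (fun i => Rc i m)); [exact Hc | | lia | lia].
    intros y Hy; rewrite Hexp by assumption; apply sum_f_R0_sum_lt. }
  rewrite (Hcoef n k), (Hcoef k n) by lia.
  apply antideriv_comb_unit_sym, Hreg.
Qed.
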